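(* Let $G$ be a graph with a correspondence-cover $(L,H)$, and let $T$ be an induced subgraph of $G$ such that: (i) every vertex of $T$ has at most one neighbor outside $T$; (ii) $2\leq |L(u)|\leq |L(v)|$ for every $u\in V(T)$ that has a (unique) neighbor $v$ outside $T$; (iii) the restriction of $(L,H)$ to $G\setminus T$ has a fractional packing; (iv) every correspondence-cover $(L_T,H_T)$ of $T$ with $|L_T(u)|=|L(u)|$ for each $u\in V(T)$ having no neighbor outside $T$, and $|L_T(u)|=|L(u)|-1$ for each $u\in V(T)$ having a neighbor outside $T$, has a fractional packing. Then $(L,H)$ has a fractional packing.
   Context: All graphs are finite and simple. $G\setminus T$ is the subgraph induced by the vertices not in $T$. A correspondence-cover of a graph $G$ is a pair $(L,H)$ where $H$ is a graph and $L$ maps each $v\in V(G)$ to a subset $L(v)\subseteq V(H)$ such that: the sets $L(v)$ partition $V(H)$; each $L(v)$ induces a clique in $H$; if $uv\notin E(G)$ there are no edges of $H$ between $L(u)$ and $L(v)$; if $uv\in E(G)$ the edges of $H$ between $L(u)$ and $L(v)$ form a matching. The restriction of $(L,H)$ to an induced subgraph $G_0$ is the cover $(L_0,H_0)$ of $G_0$ with $L_0(v)=L(v)$ for $v\in V(G_0)$ and $H_0=H-\bigcup_{u\notin V(G_0)}L(u)$. An independent transversal of a cover is an independent set of the cover graph containing exactly one vertex of each list. A cover has a fractional packing if there is a probability distribution on its independent transversals $I$ such that $\Pr(x\in I)=1/|L(v)|$ for every vertex $v$ and every $x\in L(v)$ (lists need not have equal sizes). *)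

From HB Require Import structures.
From mathcomp Require Import all_boot all_order all_algebra.
Set Implicit Arguments. Unset Strict Implicit. Unset Printing Implicit Defensive.
Import Order.TTheory GRing.Theory Num.Theory.
Local Open Scope ring_scope.

Definition simple_graph (V : finType) (e : rel V) : Prop :=
  symmetric e /\ irreflexive e.

Definition is_cover (V W : finType) (e : rel V) (h : rel W)
    (L : V -> {set W}) : Prop :=
  [/\ simple_graph h,
      ((forall w : W, exists v : V, w \in L v) /\
       (forall u v : V, u != v -> [disjoint L u & L v])),
      (forall (v : V) (x y : W), x \in L v -> y \in L v -> x != y -> h x y),
      (forall (u v : V) (x y : W), u != v -> ~~ e u v ->
          x \in L u -> y \in L v -> ~~ h x y)
    & (* adjacent vertices: the edges between the lists form a matching *)
      (forall (u v : V) (x x' y y' : W), e u v ->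
          x \in L u -> x' \in L u -> y \in L v -> y' \in L v ->
          h x y -> h x' y' -> (x == x') = (y == y'))].

Definition indep_transversal (V W : finType) (h : rel W)
    (L : V -> {set W}) (I : {set W}) : Prop :=
  (forall x y, x \in I -> y \in I -> ~~ h x y) /\
  (forall v : V, #|I :&: L v| = 1%N).

Definition frac_packing (R : realFieldType) (V W : finType) (h : rel W)
    (L : V -> {set W}) : Prop :=
  exists p : {set W} -> R,
    [/\ (forall I, 0 <= p I),
        (forall I, p I != 0 -> indep_transversal h L I),
        \sum_(I : {set W}) p I = 1
      & forall (v : V) (x : W), x \in L v ->
          \sum_(I : {set W} | x \in I) p I = (#|L v|%:R)^-1].

Definition sub_vert (V : finType) (S : {set V}) : finType := {v : V | v \in S}.

Definition sub_rel (V : finType) (S : {set V}) (e : rel V) : rel (sub_vert S) :=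
  fun x y => e (val x) (val y).

Definition restr_cover_vert (V W : finType) (L : V -> {set W}) (S : {set V})
  : finType := {w : W | [exists v in S, w \in L v]}.

Definition restr_cover_rel (V W : finType) (L : V -> {set W}) (S : {set V})
    (h : rel W) : rel (restr_cover_vert L S) :=
  fun x y => h (val x) (val y).

Definition restr_cover_list (V W : finType) (L : V -> {set W}) (S : {set V})
    (v : sub_vert S) : {set restr_cover_vert L S} :=
  [set w | val w \in L (val v)].

Definition has_out_nbr (V : finType) (e : rel V) (T : {set V}) (u : V) : bool :=
  [exists v, e u v && (v \notin T)].

Arguments restr_cover_vert {V W} L S.
Arguments restr_cover_rel {V W} L S h _ _.
Arguments restr_cover_list {V W} L S v.
Arguments sub_rel {V} S e _ _.
Arguments has_out_nbr {V} e T u.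

From mathcomp Require Import all_boot all_order all_algebra ring.
Set Implicit Arguments. Unset Strict Implicit. Unset Printing Implicit Defensive.
Import Order.TTheory GRing.Theory Num.Theory.
Local Open Scope ring_scope.

(* Draw an independent transversal [I] of the cover outside [T] from the packing
   of (iii).  Every boundary vertex [u] of [T] has a unique neighbour [v] outside
   [T], and [I] contains one colour [x] of [L v]; delete from [L u] a colour drawn
   from a fixed kernel [L v -> L u] that moves [x] to its [H]-neighbour in [L u]
   when it has one, and whose column sums are [|L v| / |L u|].  Averaged over [I],
   the deleted colour is uniform on [L u], and [I] has no neighbour left in the
   reduced lists of [T].  Those lists have the sizes of (iv), so a packing of the
   reduced cover completes [I]; a colour of [L u] then survives with probability
   [1 - 1/|L u|] and is chosen with probability [1/(|L u| - 1)], i.e. [1/|L u|]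
   in total.  Choosing the deletions independently over the boundary keeps all
   these marginals. *)

Section Sums.
Variable R : pzSemiRingType.

Lemma sumr_neq0_exists (I : finType) (P : pred I) (F : I -> R) :
  \sum_(i | P i) F i != 0 -> exists2 i, P i & F i != 0.
Proof.
case: (pickP [pred i | P i && (F i != 0)]) => [i /andP[Pi Fi] _ | none]; first by exists i.
by rewrite big1 ?eqxx // => i Pi; apply/eqP; move: (none i); rewrite /= Pi => /negbFE.
Qed.

Lemma sum_mul_indicator (I : finType) (P : pred I) (F : I -> R) :
  \sum_i F i * (P i)%:R = \sum_(i | P i) F i.
Proof.
by rewrite [RHS]big_mkcond; apply: eq_bigr => i _; case: (P i); rewrite ?mulr1 ?mulr0.
Qed.

Lemma sum_indicator_uniq (I : finType) (A : {pred I}) (P : pred I) :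
  {in A &, forall i j, P i -> P j -> i = j} ->
  \sum_(i in A) (P i)%:R = [exists i in A, P i]%:R :> R.
Proof.
move=> Puniq; case: exists_inP => [[i Ai Pi]|none].
  rewrite (bigD1 i) //= Pi big1 ?addr0 // => j /andP[Aj ji].
  by case Pj: (P j) => //; move: ji; rewrite (Puniq _ _ Aj Ai Pj Pi) eqxx.
by rewrite big1 // => i Ai; case Pi: (P i) => //; case: none; exists i.
Qed.

Lemma eq_sum_weighted (I : finType) (P F G : I -> R) :
  (forall i, P i != 0 -> F i = G i) -> \sum_i P i * F i = \sum_i P i * G i.
Proof.
move=> FG; apply: eq_bigr => i _.
by case: (eqVneq (P i) 0) => [->|/FG ->]; rewrite ?mul0r.
Qed.

End Sums.

Section Pushforward.
Variables (R : numDomainType) (A B : finType) (f : A -> B) (w : A -> R).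

Definition push (b : B) : R := \sum_(a | f a == b) w a.

Lemma sum_push (G : B -> R) : \sum_b push b * G b = \sum_a w a * G (f a).
Proof.
rewrite (partition_big f xpredT) //=; apply: eq_bigr => b _.
by rewrite big_distrl; apply: eq_bigr => a /eqP ->.
Qed.

Lemma push_ge0 b : (forall a, 0 <= w a) -> 0 <= push b.
Proof. by move=> w_ge0; apply: sumr_ge0 => a _. Qed.

Lemma push_neq0 b : push b != 0 -> exists2 a, w a != 0 & b = f a.
Proof. by case/sumr_neq0_exists => a /eqP <-; exists a. Qed.

End Pushforward.

Section ProductDistribution.
Variables (R : comPzSemiRingType) (D Y : finType) (mu : D -> Y -> R).
Hypothesis mu_mass : forall d, \sum_y mu d y = 1.

Lemma prod_mass : \sum_(r : {ffun D -> Y}) \prod_d mu d (r d) = 1.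
Proof. by rewrite -bigA_distr_bigA big1. Qed.

Lemma prod_marg d y :
  \sum_(r : {ffun D -> Y}) (\prod_d' mu d' (r d')) * (r d == y)%:R = mu d y.
Proof.
pose F d' z := mu d' z * (if d' == d then (z == y)%:R else 1).
transitivity (\sum_(r : {ffun D -> Y}) \prod_d' F d' (r d')).
  apply: eq_bigr => r _; rewrite /F big_split /=; congr (_ * _).
  by rewrite (bigD1 d) //= eqxx big1 ?mulr1 // => d' /negbTE ->.
have others d' : d' != d -> \sum_z F d' z = 1.
  move=> /negbTE d'd; rewrite -[RHS](mu_mass d').
  by apply: eq_bigr => z _; rewrite /F d'd mulr1.
rewrite -bigA_distr_bigA (bigD1 d) //= [X in _ * X]big1 ?mulr1 //.
rewrite (bigD1 y) //= /F !eqxx mulr1.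
by rewrite big1 ?addr0 // => z /negbTE ->; rewrite mulr0.
Qed.

End ProductDistribution.

Section Transport.
Variables (R : numFieldType) (W : finType) (h : rel W) (A B : {set W}).
Hypothesis matching : forall x x' y y', x \in A -> x' \in A -> y \in B -> y' \in B ->
  h x y -> h x' y' -> (x == x') = (y == y').
Hypothesis B_gt0 : (0 < #|B|)%N.
Hypothesis B_le_A : (#|B| <= #|A|)%N.

Definition matched_src := [set x in A | [exists y in B, h x y]].
Definition matched_dst := [set y in B | [exists x in A, h x y]].

(* Each matched source sends its unit of mass to its partner; an unmatched
   source sends [spread y] to every target [y], which tops every target up to
   [#|A| / #|B|]. *)
Definition spread y : R :=
  (#|A|%:R / #|B|%:R - (y \in matched_dst)%:R) / (#|A|%:R - #|matched_dst|%:R).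

Definition transport x y : R :=
  if (x \in A) && (y \in B) then (h x y)%:R + (x \notin matched_src)%:R * spread y else 0.

Lemma card_matched : #|matched_dst| = #|matched_src|.
Proof.
set E := [set p : W * W | [&& p.1 \in A, p.2 \in B & h p.1 p.2]].
have matchedE (f : W * W -> W) (M : {set W}) :
    (forall z, (z \in M) = [exists p in E, f p == z]) -> M = f @: E.
  move=> ME; apply/setP => z; rewrite ME; apply/existsP/imsetP.
    by case=> p /andP[pE /eqP <-]; exists p.
  by case=> p pE ->; exists p; rewrite pE eqxx.
have -> : matched_dst = [set p.2 | p in E].
  apply: matchedE => y.
  rewrite inE; apply/andP/exists_inP => [[yB /exists_inP[x xA hxy]]|[[x y'] /=]].
    by exists (x, y); rewrite // inE xA yB.
  by rewrite inE => /and3P[xA y'B hxy] /eqP <-; split=> //; apply/exists_inP; exists x.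
have -> : matched_src = [set p.1 | p in E].
  apply: matchedE => x.
  rewrite inE; apply/andP/exists_inP => [[xA /exists_inP[y yB hxy]]|[[x' y] /=]].
    by exists (x, y); rewrite // inE xA yB.
  by rewrite inE => /and3P[x'A yB hxy] /eqP <-; split=> //; apply/exists_inP; exists y.
rewrite !card_in_imset // => -[x y] [x' y']; rewrite !inE /=
  => /and3P[xA yB hxy] /and3P[x'A y'B hxy'] /= eq; subst.
- by have := matching xA x'A yB y'B hxy hxy'; rewrite eqxx => /esym/eqP ->.
- by have := matching xA x'A yB y'B hxy hxy'; rewrite eqxx => /eqP ->.
Qed.

Lemma transport_ge0 x y : 0 <= transport x y.
Proof.
rewrite /transport; case: ifP => // _; apply: addr_ge0; first by case: (h x y).
apply: mulr_ge0; first by case: (x \notin _).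
apply: divr_ge0.
  rewrite subr_ge0; apply: (@le_trans _ _ 1); first by case: (y \in _).
  by rewrite ler_pdivlMr ?mul1r ?ler_nat // ltr0n.
rewrite subr_ge0 ler_nat card_matched subset_leq_card //.
by apply/subsetP => x'; rewrite inE => /andP[].
Qed.

Lemma transport_neq0 x y : transport x y != 0 -> (x \in A) && (y \in B).
Proof. by rewrite /transport; case: ifP => //; rewrite eqxx. Qed.

Lemma transport_matched x y y' :
  transport x y != 0 -> y' \in B -> h x y' -> y = y'.
Proof.
move=> nz y'B hxy'; have /andP[xA yB] := transport_neq0 nz.
have xM : x \in matched_src by rewrite inE xA; apply/exists_inP; exists y'.
move: nz; rewrite /transport xA yB xM mul0r addr0; case hxy: (h x y); last by rewrite eqxx.
by have := matching xA xA yB y'B hxy hxy'; rewrite eqxx => /esym/eqP.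
Qed.

Lemma transport_row x : x \in A -> \sum_y transport x y = 1.
Proof.
move=> xA; rewrite (bigID [pred y | y \in B]) /= [X in _ + X]big1 ?addr0; last first.
  by move=> y /negbTE yB; rewrite /transport yB andbF.
rewrite (eq_bigr (fun y => (h x y)%:R + (x \notin matched_src)%:R * spread y))
  => [|y yB]; last by rewrite /transport xA yB.
rewrite big_split /= sum_indicator_uniq => [|y y' yB y'B hxy hxy']; last first.
  by have := matching xA xA yB y'B hxy hxy'; rewrite eqxx => /esym/eqP.
have matchedE : [exists y in B, h x y] = (x \in matched_src) by rewrite inE xA.
rewrite matchedE; case: (boolP (x \in matched_src)) => [xM|xnM].
  by rewrite big1 ?addr0 // => y _; rewrite mul0r.
rewrite add0r -big_distrr /= mul1r -big_distrl /= big_split /= sumrN sumr_const.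
have -> : \sum_(y in B) (y \in matched_dst)%:R = #|matched_dst|%:R :> R.
  rewrite -sum1_card natr_sum [LHS]big_mkcond [RHS]big_mkcond.
  by apply: eq_bigr => y _; rewrite inE; case: (y \in B); case: [exists _ in A, _].
rewrite -[_ *+ #|B|]mulr_natr divfK ?mulfV //; last by rewrite pnatr_eq0 -lt0n.
rewrite subr_eq0 eqr_nat card_matched; apply: contraNneq xnM => eqAM.
suff /eqP -> : matched_src == A by [].
by rewrite eqEcard -eqAM leqnn andbT; apply/subsetP => x'; rewrite inE => /andP[].
Qed.

Lemma transport_col y : y \in B -> \sum_x transport x y = #|A|%:R / #|B|%:R.
Proof.
move=> yB; rewrite (bigID [pred x | x \in A]) /= [X in _ + X]big1 ?addr0; last first.
  by move=> x /negbTE xA; rewrite /transport xA.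
rewrite (eq_bigr (fun x => (h x y)%:R + (x \notin matched_src)%:R * spread y))
  => [|x xA]; last by rewrite /transport xA yB.
rewrite big_split /= sum_indicator_uniq => [|x x' xA x'A hxy hx'y]; last first.
  by have := matching xA x'A yB yB hxy hx'y; rewrite eqxx => /eqP.
have -> : [exists x in A, h x y] = (y \in matched_dst) by rewrite inE yB.
rewrite -big_distrl /=.
have -> : \sum_(x in A) (x \notin matched_src)%:R = (#|A| - #|matched_dst|)%:R :> R.
  have M_sub : matched_src \subset A by apply/subsetP => x; rewrite inE => /andP[].
  rewrite card_matched -(setIidPr M_sub) -cardsD -sum1_card natr_sum.
  rewrite [LHS]big_mkcond [RHS]big_mkcond; apply: eq_bigr => x _; rewrite !inE.
  by case: (x \in A); case: [exists _ in B, _].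
rewrite natrB; last first.
  by rewrite card_matched subset_leq_card //; apply/subsetP => x; rewrite inE => /andP[].
have B_neq0 : #|B|%:R != 0 :> R by rewrite pnatr_eq0 -lt0n.
case: (eqVneq #|A| #|matched_dst|) => [eqAM|neqAM].
  have eqBM : #|B| = #|matched_dst|.
    apply/eqP; rewrite eqn_leq -{1}eqAM B_le_A subset_leq_card //.
    by apply/subsetP => y'; rewrite inE => /andP[].
  have yM : y \in matched_dst.
    suff /eqP -> : matched_dst == B by [].
    by rewrite eqEcard eqBM leqnn andbT; apply/subsetP => y'; rewrite inE => /andP[].
  by rewrite yM eqAM subrr mul0r addr0 -eqBM mulfV.
rewrite mulrCA mulfV ?mulr1; first by rewrite addrC subrK.
by rewrite subr_eq0 eqr_nat.
Qed.

Definition transport_from (I : {set W}) y : R := \sum_(x in I) transport x y.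

Lemma transport_from_ge0 I y : 0 <= transport_from I y.
Proof. by apply: sumr_ge0 => x _; apply: transport_ge0. Qed.

Lemma transport_fromP I y :
  transport_from I y != 0 -> exists2 x, x \in I & transport x y != 0.
Proof. exact: sumr_neq0_exists. Qed.

Lemma transport_from_mass I : #|I :&: A| = 1%N -> \sum_y transport_from I y = 1.
Proof.
move=> IA1; rewrite exchange_big /= (bigID [pred x | x \in A]) /=.
rewrite [X in _ + X]big1 ?addr0 => [|x /andP[_ /negbTE xA]]; last first.
  by apply: big1 => y _; rewrite /transport xA.
rewrite (eq_bigr (fun=> 1)) => [|x /andP[_]]; last exact: transport_row.
by rewrite sumr_const (eq_card (B := I :&: A)) ?IA1 // => x; rewrite inE.
Qed.

Lemma transport_from_marg (P : {set W} -> R) y :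
  (forall x, x \in A -> \sum_I P I * (x \in I)%:R = #|A|%:R^-1) ->
  y \in B -> \sum_I P I * transport_from I y = #|B|%:R^-1.
Proof.
move=> Pmarg yB; have A_neq0 : #|A|%:R != 0 :> R.
  by rewrite pnatr_eq0 -lt0n (leq_trans B_gt0).
transitivity (\sum_x transport x y * #|A|%:R^-1); last first.
  by rewrite -big_distrl /= transport_col // mulrAC mulfV ?mul1r.
under eq_bigr do rewrite /transport_from -sum_mul_indicator big_distrr /=.
rewrite exchange_big /=; apply: eq_bigr => x _.
case: (boolP (x \in A)) => xA; last first.
  by rewrite /transport (negbTE xA) /= mul0r big1 // => I _; rewrite mul0r mulr0.
by rewrite -(Pmarg x xA) big_distrr /=; apply: eq_bigr => I _; rewrite mulrCA mulrA.
Qed.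

End Transport.

Arguments transport_from {R W} h A B I y.

Section RestrictedCover.
Variables (R : realFieldType) (V W : finType) (e : rel V) (h : rel W)
  (L : V -> {set W}).
Hypothesis HC : is_cover e h L.

Lemma cover_h_sym : symmetric h.
Proof. by case: HC => -[]. Qed.

Lemma cover_list_unique u v w : w \in L u -> w \in L v -> u = v.
Proof.
move=> wu wv; apply: contraTeq isT => neq.
by case: HC => _ [_ /(_ _ _ neq) /disjointFr /(_ wu)]; rewrite wv.
Qed.

Lemma cover_no_edge u v x y :
  u != v -> ~~ e u v -> x \in L u -> y \in L v -> ~~ h x y.
Proof. by case: HC => _ _ _ H _; apply: H. Qed.

Lemma cover_matching u v x x' y y' : e u v ->
  x \in L u -> x' \in L u -> y \in L v -> y' \in L v ->
  h x y -> h x' y' -> (x == x') = (y == y').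
Proof. by case: HC => _ _ _ _ H; apply: H. Qed.

Definition independent (J : {set W}) := forall x y, x \in J -> y \in J -> ~~ h x y.

Definition sub_colour (P : pred W) : finType := {w : W | P w}.

Definition sub_colour_rel (P : pred W) : rel (sub_colour P) :=
  fun x y => h (val x) (val y).

Definition sub_list (S : {set V}) (P : pred W) (v : sub_vert S) : {set sub_colour P} :=
  [set w | val w \in L (val v)].

Local Arguments sub_colour_rel : clear implicits.
Local Arguments sub_list : clear implicits.

(* Packings of the restriction of the cover to [S], with the colours outside
   [P] deleted, pushed forward to distributions on [{set W}]. *)
Definition packing_on (S : {set V}) (P : pred W) (q : {set W} -> R) :=
  [/\ forall J, 0 <= q J, \sum_J q J = 1,
      forall J, q J != 0 ->
        [/\ independent J, forall u, u \in S -> #|J :&: L u| = 1%N & {subset J <= P}]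
    & forall u x, u \in S -> x \in L u -> P x ->
        \sum_J q J * (x \in J)%:R = #|[set y in L u | P y]|%:R^-1].

Section SubCover.
Variables (S : {set V}) (P : pred W).

Lemma sub_cover : (forall w, P w -> exists2 u, u \in S & w \in L u) ->
  is_cover (sub_rel S e) (sub_colour_rel P) (sub_list S P).
Proof.
move=> P_covered; case: HC => [[h_sym h_irr] [_ L_disj] L_clique L_no_edge L_match].
split.
- by split; [move=> a b; apply: h_sym | move=> a; apply: h_irr].
- split=> [w|u v uv].
    by have [u uS wu] := P_covered _ (valP w); exists (Sub u uS); rewrite inE SubK.
  rewrite -setI_eq0; apply/eqP/setP => w; rewrite !inE; apply/andP => -[wu wv].
  by move: uv; rewrite (val_inj (cover_list_unique wu wv)) eqxx.
- move=> v x y; rewrite !inE => xv yv xy; apply: L_clique xv yv _.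
  by apply: contra xy => /eqP /val_inj ->.
- move=> u v x y uv euv; rewrite !inE => xu yv.
  by apply: L_no_edge xu yv => //; apply: contra uv => /eqP /val_inj ->.
- move=> u v x x' y y' euv; rewrite !inE => xu x'u yv y'v hxy hx'y'.
  by rewrite -!(inj_eq val_inj); apply: L_match xu x'u yv y'v hxy hx'y'.
Qed.

Lemma card_sub_list v : #|sub_list S P v| = #|[set y in L (val v) | P y]|.
Proof.
rewrite -(card_imset _ val_inj); apply: eq_card => y; rewrite !inE.
apply/imsetP/andP => [[y' y'v ->]|[yv Py]]; first by move: y'v; rewrite inE => ->; case: y'.
by exists (Sub y Py : sub_colour P); rewrite ?inE ?SubK.
Qed.

Lemma packing_on_sub : frac_packing R (sub_colour_rel P) (sub_list S P) ->
  exists q, packing_on S P q.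
Proof.
case=> p [p_ge0 p_transversal p_mass p_marg].
have val_lift (K : {set sub_colour P}) x (Px : P x) :
    (x \in val @: K) = (Sub x Px \in K).
  by rewrite -[x]/(val (Sub x Px : sub_colour P)) mem_imset //; apply: val_inj.
exists (push (fun K : {set sub_colour P} => val @: K) p); split.
- by move=> J; apply: push_ge0.
- under eq_bigr do rewrite -[push _ _ _]mulr1.
  by rewrite sum_push -[RHS]p_mass; apply: eq_bigr => K _; rewrite mulr1.
- move=> J /push_neq0[K /p_transversal[K_indep K_meets] ->]; split.
  + by move=> _ _ /imsetP[x xK ->] /imsetP[y yK ->]; apply: K_indep.
  + move=> u uS; rewrite -(K_meets (Sub u uS)) -(card_imset _ val_inj).
    apply: eq_card => x; rewrite !inE; apply/andP/imsetP.
      by case=> /imsetP[x' x'K ->] x'u; exists x'; rewrite // !inE x'K.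
    by case=> x'; rewrite !inE => /andP[x'K x'u] ->; rewrite x'u imset_f.
  + by move=> _ /imsetP[x _ ->]; apply: valP.
- move=> u x uS xu Px; rewrite sum_push.
  rewrite -[u]/(val (Sub u uS : sub_vert S)) -card_sub_list.
  rewrite -(p_marg _ (Sub x Px)) ?inE // -[RHS]sum_mul_indicator.
  by apply: eq_bigr => K _; rewrite val_lift.
Qed.

End SubCover.
End RestrictedCover.

Arguments sub_colour_rel {W} h P _ _.
Arguments sub_list {V W} L S P v.

Section Reduction.
Variables (R : realFieldType) (V W : finType) (e : rel V) (h : rel W)
  (L : V -> {set W}) (T : {set V}).
Hypothesis e_sym : symmetric e.
Hypothesis HC : is_cover e h L.
Hypothesis one_out_nbr :
  forall u, u \in T -> (#|[set v | e u v & v \notin T]| <= 1)%N.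
Hypothesis list_sizes : forall u v, u \in T -> v \notin T -> e u v ->
  (2 <= #|L u|)%N /\ (#|L u| <= #|L v|)%N.

Definition boundary := [set u in T | has_out_nbr e T u].

Definition out_nbr u := odflt u [pick v | e u v && (v \notin T)].

Lemma boundaryP u v : u \in T -> v \notin T -> e u v -> u \in boundary.
Proof. by move=> uT vT euv; rewrite inE uT; apply/existsP; exists v; rewrite euv. Qed.

Lemma out_nbrP u : u \in boundary -> e u (out_nbr u) && (out_nbr u \notin T).
Proof.
rewrite inE => /andP[_ /existsP[v euv]]; rewrite /out_nbr; case: pickP => //=.
by move=> /(_ v); rewrite euv.
Qed.

Lemma out_nbr_unique u v : u \in T -> v \notin T -> e u v -> v = out_nbr u.
Proof.
move=> uT vT euv; have /andP[eun unT] := out_nbrP (boundaryP uT vT euv).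
apply: contraTeq (one_out_nbr uT) => vu; rewrite -ltnNge (cardsD1 v) !inE euv vT.
by rewrite ltnS card_gt0; apply/set0Pn; exists (out_nbr u); rewrite !inE eun unT eq_sym vu.
Qed.

Local Notation bnd := (sub_vert boundary).

Lemma boundary_in_T (d : bnd) : val d \in T.
Proof. by have := valP d; rewrite inE => /andP[]. Qed.

Lemma boundary_matching (d : bnd) x x' y y' :
  x \in L (out_nbr (val d)) -> x' \in L (out_nbr (val d)) ->
  y \in L (val d) -> y' \in L (val d) -> h x y -> h x' y' -> (x == x') = (y == y').
Proof.
have /andP[eun _] := out_nbrP (valP d).
by apply: (cover_matching HC); rewrite e_sym.
Qed.

Lemma boundary_list_sizes (d : bnd) :
  (2 <= #|L (val d)|)%N /\ (#|L (val d)| <= #|L (out_nbr (val d))|)%N.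
Proof.
by have /andP[eun unT] := out_nbrP (valP d); apply: list_sizes (boundary_in_T d) unT eun.
Qed.

Definition outside : pred W := fun w => [exists v in ~: T, w \in L v].

(* [r] lists the colour removed from the list of each boundary vertex. *)
Definition inside (r : {ffun bnd -> W}) : pred W :=
  fun w => [exists u in T, w \in L u] && (w \notin codom r).

Lemma outside_list x v : outside x -> x \in L v -> v \notin T.
Proof.
by case/exists_inP => v'; rewrite inE => v'T xv' xv; rewrite (cover_list_unique HC xv xv').
Qed.

Lemma inside_list r x u : inside r x -> x \in L u -> u \in T.
Proof.
by case/andP => /exists_inP[u' u'T xu'] _ xu; rewrite (cover_list_unique HC xu xu').
Qed.

Definition list_choice (r : {ffun bnd -> W}) := [forall d, r d \in L (val d)].

Lemma codom_list_choice r (d : bnd) y :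
  list_choice r -> y \in L (val d) -> (y \in codom r) = (y == r d).
Proof.
move=> /forallP r_choice yd; apply/codomP/eqP => [[d' yd']|->]; last by exists d.
rewrite yd' in yd *; congr (r _); apply: val_inj.
exact: (cover_list_unique HC (r_choice d') yd).
Qed.

Lemma notin_codom_list_choice r u y :
  list_choice r -> y \in L u -> u \notin boundary -> y \notin codom r.
Proof.
move=> /forallP r_choice yu; apply: contra => /codomP[d yd]; rewrite yd in yu.
by rewrite -(cover_list_unique HC (r_choice d) yu) (valP d).
Qed.

Lemma card_inside r u : list_choice r -> u \in T ->
  #|[set y in L u | inside r y]| = (#|L u| - (u \in boundary))%N.
Proof.
move=> r_choice uT.
have in_T y : y \in L u -> [exists u in T, y \in L u].
  by move=> yu; apply/exists_inP; exists u.
case: (boolP (u \in boundary)) => [uB|unB]; last first.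
  rewrite subn0; apply: eq_card => y; rewrite !inE /inside.
  apply/andP/idP => [[]//|yu]; split; rewrite // in_T //.
  exact: (notin_codom_list_choice r_choice yu unB).
have /forallP r_choice_u := r_choice; have ru := r_choice_u (Sub u uB).
rewrite (cardsD1 (r (Sub u uB)) (L u)) ru add1n subn1 /=; apply: eq_card => y.
rewrite !inE /inside; apply/andP/andP => [[yu /andP[_ ynr]]|[ynr yu]]; split=> //.
  by move: ynr; rewrite (codom_list_choice (d := Sub u uB) r_choice yu).
by rewrite in_T // (codom_list_choice (d := Sub u uB) r_choice yu).
Qed.

Lemma card_outside v : v \notin T -> #|[set y in L v | outside y]| = #|L v|.
Proof.
move=> vT; apply: eq_card => y; rewrite inE; apply: andb_idr => yv.
by apply/exists_inP; exists v; rewrite ?inE.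
Qed.

Definition removal (I : {set W}) (d : bnd) : W -> R :=
  transport_from h (L (out_nbr (val d))) (L (val d)) I.

Definition removal_prob (I : {set W}) (r : {ffun bnd -> W}) : R :=
  \prod_d removal I d (r d).

Section Assembly.
Variable P1 : {set W} -> R.
Hypothesis P1_packing : packing_on h L (~: T) outside P1.
Variable q : {ffun bnd -> W} -> {set W} -> R.
Hypothesis q_packing : forall r, list_choice r -> packing_on h L T (inside r) (q r).

Lemma P1_support I : P1 I != 0 ->
  [/\ independent h I, forall v, v \notin T -> #|I :&: L v| = 1%N & {subset I <= outside}].
Proof.
case: P1_packing => _ _ P1_supp _ /P1_supp[indep meets sub].
by split=> // v vT; apply: meets; rewrite inE.
Qed.

Lemma removal_mass I d : P1 I != 0 -> \sum_y removal I d y = 1.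
Proof.
move=> /P1_support[_ meets _]; have [/ltnW pos _] := boundary_list_sizes d.
apply: transport_from_mass => //; first exact: boundary_matching.
by apply: meets; have /andP[] := out_nbrP (valP d).
Qed.

Lemma removal_marg d y :
  y \in L (val d) -> \sum_I P1 I * removal I d y = #|L (val d)|%:R^-1.
Proof.
have [/ltnW pos le_out] := boundary_list_sizes d.
apply: transport_from_marg => // [x x' y1 y1'|x xn]; first exact: boundary_matching.
have /andP[_ unT] := out_nbrP (valP d).
case: P1_packing => _ _ _ P1_marg.
rewrite (P1_marg (out_nbr (val d))) ?card_outside ?inE //.
by apply/exists_inP; exists (out_nbr (val d)); rewrite ?inE.
Qed.

Lemma removal_prob_ge0 I r : 0 <= removal_prob I r.
Proof.
apply: prodr_ge0 => d _; have [/ltnW pos le_out] := boundary_list_sizes d.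
by apply: transport_from_ge0 => //; apply: boundary_matching.
Qed.

Lemma removal_prob_mass I : P1 I != 0 -> \sum_r removal_prob I r = 1.
Proof. by move=> P1I; apply: prod_mass => d; apply: removal_mass. Qed.

Lemma removal_prob_marg I d y : P1 I != 0 ->
  \sum_r removal_prob I r * (r d == y)%:R = removal I d y.
Proof. by move=> P1I; apply: prod_marg => d'; apply: removal_mass. Qed.

Lemma removal_prob_neq0 I r d : removal_prob I r != 0 -> removal I d (r d) != 0.
Proof. by move/prodf_neq0; apply. Qed.

Lemma removal_prob_list_choice I r : removal_prob I r != 0 -> list_choice r.
Proof.
move=> nz; apply/forallP => d.
by have [x _ /transport_neq0 /andP[]] := transport_fromP (removal_prob_neq0 d nz).
Qed.

Lemma q_mass r : list_choice r -> \sum_J q r J = 1.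
Proof. by case/q_packing. Qed.

Lemma q_marg r v x : list_choice r -> v \in T -> x \in L v ->
  \sum_J q r J * (x \in J)%:R = (x \notin codom r)%:R / (#|L v| - (v \in boundary))%:R.
Proof.
move=> r_choice vT xv; have [_ _ q_supp q_m] := q_packing r_choice.
case: (boolP (x \in codom r)) => xr; last first.
  rewrite mul1r -(card_inside r_choice vT) (q_m v) //.
  by rewrite /inside xr andbT; apply/exists_inP; exists v.
rewrite mul0r big1 // => J _; case: (eqVneq (q r J) 0) => [->|/q_supp[_ _ J_in]].
  by rewrite mul0r.
by case: (boolP (x \in J)) => [/J_in /andP[_]|]; rewrite ?xr ?mulr0.
Qed.

Definition mixture : {set W} -> R :=
  push (fun c : {set W} * {ffun bnd -> W} * {set W} => c.1.1 :|: c.2)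
       (fun c => P1 c.1.1 * removal_prob c.1.1 c.1.2 * q c.1.2 c.2).

Lemma sum_mixture (G : {set W} -> R) : \sum_I mixture I * G I =
  \sum_I1 P1 I1 * \sum_r removal_prob I1 r * \sum_J q r J * G (I1 :|: J).
Proof.
rewrite sum_push.
rewrite -(pair_bigA _ (fun a J => P1 a.1 * removal_prob a.1 a.2 * q a.2 J * G (a.1 :|: J))).
rewrite -(pair_bigA _ (fun I1 r => \sum_J P1 I1 * removal_prob I1 r * q r J * G (I1 :|: J))).
apply: eq_bigr => I1 _; rewrite big_distrr; apply: eq_bigr => r _.
by rewrite !big_distrr; apply: eq_bigr => J _ /=; rewrite !mulrA.
Qed.

Lemma mixture_weight_neq0 I1 r J :
  P1 I1 * removal_prob I1 r * q r J != 0 ->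
  [/\ P1 I1 != 0, removal_prob I1 r != 0 & q r J != 0].
Proof. by rewrite !mulf_eq0 !negb_or => /andP[/andP[]]. Qed.

Lemma mixture_ge0 I : 0 <= mixture I.
Proof.
apply: push_ge0 => -[[I1 r] J] /=.
case: (eqVneq (removal_prob I1 r) 0) => [->|/removal_prob_list_choice/q_packing[q_ge0 _ _ _]].
  by rewrite mulr0 mul0r.
case: P1_packing => P1_ge0 _ _ _.
by rewrite mulr_ge0 ?mulr_ge0 ?removal_prob_ge0.
Qed.

Lemma sum_mixture_outside (G : {set W} -> R) (F : {set W} -> R) :
  (forall I1 r J, P1 I1 != 0 -> removal_prob I1 r != 0 -> q r J != 0 ->
     G (I1 :|: J) = F I1) ->
  \sum_I mixture I * G I = \sum_I1 P1 I1 * F I1.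
Proof.
move=> GF; rewrite sum_mixture; apply: eq_sum_weighted => I1 P1I.
transitivity (\sum_r removal_prob I1 r * F I1); last first.
  by rewrite -big_distrl /= removal_prob_mass ?mul1r.
apply: eq_sum_weighted => r rpr; have r_choice := removal_prob_list_choice rpr.
transitivity (\sum_J q r J * F I1); last by rewrite -big_distrl /= q_mass ?mul1r.
by apply: (eq_sum_weighted (F := fun J => G (I1 :|: J))) => J qJ; exact: GF P1I rpr qJ.
Qed.

Lemma mixture_mass : \sum_I mixture I = 1.
Proof.
case: P1_packing => _ P1_mass _ _.
under eq_bigr do rewrite -[mixture _]mulr1.
rewrite (@sum_mixture_outside (fun=> 1) (fun=> 1)) //.
by under eq_bigr do rewrite mulr1.
Qed.

Lemma cross_independent I1 r J a b :
  P1 I1 != 0 -> removal_prob I1 r != 0 -> q r J != 0 ->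
  a \in I1 -> b \in J -> ~~ h a b.
Proof.
move=> P1I rpr qJ aI bJ; apply/negP => hab.
have [_ I1_meets I1_out] := P1_support P1I.
have r_choice := removal_prob_list_choice rpr.
have [_ _ /(_ J qJ)[_ _ J_in] _] := q_packing r_choice.
have /exists_inP[v vT av] := I1_out a aI; rewrite inE in vT.
have /andP[/exists_inP[u uT bu] bnr] := J_in b bJ.
have euv : e u v.
  apply: contraTT hab => neuv; rewrite (cover_h_sym HC).
  by apply: (cover_no_edge HC _ neuv bu av); apply: contraTneq uT => ->.
have uB := boundaryP uT vT euv; pose d : bnd := Sub u uB.
have [x xI /[dup] t_neq0 /transport_neq0 /andP[xv _]] :=
  transport_fromP (removal_prob_neq0 d rpr).
have vu := out_nbr_unique uT vT euv; rewrite /= -vu in xv t_neq0.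
have xa : x = a.
  have /eqP/cards1P[z Iz] := I1_meets v vT.
  by have := in_setI x I1 (L v); have := in_setI a I1 (L v);
    rewrite Iz !inE xI xv aI av => /eqP -> /eqP ->.
rewrite xa in t_neq0; move: bnr.
rewrite -(transport_matched _ t_neq0 bu hab); first by case/negP; apply: codom_f.
by move: (@boundary_matching d); rewrite /= -vu.
Qed.

Lemma mixture_transversal I : mixture I != 0 -> indep_transversal h L I.
Proof.
case/push_neq0 => -[[I1 r] J] /mixture_weight_neq0[P1I rpr qJ] /= ->.
have [I1_indep I1_meets I1_out] := P1_support P1I.
have [_ _ /(_ J qJ)[J_indep J_meets J_in] _] := q_packing (removal_prob_list_choice rpr).
split=> [a b|w].
  rewrite !inE => /orP[aI|aJ] /orP[bI|bJ]; first exact: I1_indep.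
  - exact: cross_independent P1I rpr qJ aI bJ.
  - by rewrite (cover_h_sym HC); apply: cross_independent P1I rpr qJ bI aJ.
  - exact: J_indep.
have disjoint_list (K : {set W}) :
    (forall x, x \in K -> x \in L w -> false) -> K :&: L w = set0.
  by move=> K_disj; apply/setP => x; rewrite !inE; apply/negP => /andP[xK /(K_disj x xK)].
case: (boolP (w \in T)) => wT.
  rewrite setIUl (disjoint_list I1) ?set0U ?J_meets // => x /I1_out xout xw.
  by move: (outside_list xout xw); rewrite wT.
rewrite setIUl (disjoint_list J) ?setU0 ?I1_meets // => x /J_in xin xw.
by move: (inside_list xin xw); rewrite (negbTE wT).
Qed.

Lemma mixture_marg_outside v x : v \notin T -> x \in L v ->
  \sum_I mixture I * (x \in I)%:R = #|L v|%:R^-1.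
Proof.
move=> vT xv; case: P1_packing => _ _ _ P1_marg.
rewrite -(card_outside vT) -(P1_marg v x) ?inE //; last first.
  by apply/exists_inP; exists v; rewrite ?inE.
apply: sum_mixture_outside => I1 r J _ rpr qJ; rewrite inE.
have [_ _ /(_ J qJ)[_ _ J_in] _] := q_packing (removal_prob_list_choice rpr).
case: (boolP (x \in J)) => [/J_in xin|]; last by rewrite orbF.
by move: (inside_list xin xv); rewrite (negbTE vT).
Qed.

Lemma removal_survival v x : v \in T -> x \in L v ->
  \sum_I1 P1 I1 * \sum_r removal_prob I1 r * (x \notin codom r)%:R =
  1 - (v \in boundary)%:R / #|L v|%:R.
Proof.
move=> vT xv; case: P1_packing => _ P1_mass _ _.
case: (boolP (v \in boundary)) => [vB|vnB]; last first.
  rewrite mul0r subr0 -[RHS]P1_mass; under [RHS]eq_bigr do rewrite -[P1 _]mulr1.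
  apply: eq_sum_weighted => I1 P1I; transitivity (\sum_r removal_prob I1 r * 1).
    apply: eq_sum_weighted => r rpr.
    by rewrite (notin_codom_list_choice (removal_prob_list_choice rpr) xv vnB).
  by rewrite -big_distrl /= removal_prob_mass ?mulr1.
pose d : bnd := Sub v vB.
transitivity (\sum_I1 P1 I1 * (1 - removal I1 d x)).
  apply: eq_sum_weighted => I1 P1I.
  transitivity (\sum_r removal_prob I1 r * (1 - (r d == x)%:R)).
    apply: eq_sum_weighted => r rpr.
    rewrite (@codom_list_choice r d) ?(removal_prob_list_choice rpr) // eq_sym.
    by case: (r d == x); rewrite ?subrr ?subr0.
  under eq_bigr do rewrite mulrBr mulr1.
  by rewrite sumrB removal_prob_mass // removal_prob_marg.
under eq_bigr do rewrite mulrBr mulr1.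
by rewrite sumrB P1_mass removal_marg // mulr1n div1r.
Qed.

Lemma mixture_marg_inside v x : v \in T -> x \in L v ->
  \sum_I mixture I * (x \in I)%:R = #|L v|%:R^-1.
Proof.
move=> vT xv; set n := (#|L v| - (v \in boundary))%N.
transitivity ((\sum_I1 P1 I1 * \sum_r removal_prob I1 r * (x \notin codom r)%:R) / n%:R).
  rewrite big_distrl /=; under [RHS]eq_bigr do rewrite -mulrA big_distrl /=.
  under [RHS]eq_bigr do under eq_bigr do rewrite -mulrA.
  rewrite sum_mixture; apply: eq_sum_weighted => I1 P1I.
  apply: eq_sum_weighted => r rpr; have r_choice := removal_prob_list_choice rpr.
  rewrite -q_marg //; apply: (eq_sum_weighted (F := fun J => (x \in I1 :|: J)%:R)) => J _.
  have [_ _ I1_out] := P1_support P1I; rewrite inE.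
  case: (boolP (x \in I1)) => [/I1_out xout|//].
  by move: (outside_list xout xv); rewrite vT.
rewrite (removal_survival vT xv) /n.
case: (boolP (v \in boundary)) => [vB|_]; last by rewrite mul0r subr0 subn0 div1r.
have [two_le _] := boundary_list_sizes (Sub v vB).
have Lv_neq0 : #|L v|%:R != 0 :> R by rewrite pnatr_eq0 -lt0n (ltnW two_le).
have Lv1_neq0 : #|L v|%:R - 1 != 0 :> R by rewrite subr_eq0 pnatr_eq1 gtn_eqF.
rewrite natrB ?(ltnW two_le) // mulr1n.
by field; rewrite Lv_neq0 Lv1_neq0.
Qed.

Lemma mixture_frac_packing : frac_packing R h L.
Proof.
exists mixture; split.
- exact: mixture_ge0.
- exact: mixture_transversal.
- exact: mixture_mass.
- move=> v x xv; rewrite -sum_mul_indicator.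
  case: (boolP (v \in T)) => vT; first exact: mixture_marg_inside.
  exact: mixture_marg_outside.
Qed.

End Assembly.
End Reduction.

Theorem mainTheorem11 (R : realFieldType) (V W : finType) (e : rel V)
    (h : rel W) (L : V -> {set W}) (T : {set V}) :
  simple_graph e ->
  is_cover e h L ->
  (* (i) *)
  (forall u, u \in T -> (#|[set v | e u v & v \notin T]| <= 1)%N) ->
  (* (ii) *)
  (forall u v, u \in T -> v \notin T -> e u v ->
     (2 <= #|L u|)%N /\ (#|L u| <= #|L v|)%N) ->
  (* (iii) *)
  frac_packing R (restr_cover_rel L (~: T) h) (restr_cover_list L (~: T)) ->
  (* (iv) *)
  (forall (WT : finType) (hT : rel WT) (LT : sub_vert T -> {set WT}),
     is_cover (sub_rel T e) hT LT ->
     (forall u : sub_vert T,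
        #|LT u| = if has_out_nbr e T (val u) then (#|L (val u)| - 1)%N
                  else #|L (val u)|) ->
     frac_packing R hT LT) ->
  frac_packing R h L.
Proof.
move=> [e_sym _] HC one_out_nbr list_sizes outside_packing T_packing.
have [P1 P1_packing] := packing_on_sub (P := outside L T) outside_packing.
have /fin_all_exists[q q_packing] : forall r : {ffun sub_vert (boundary e T) -> W},
    exists qr : {set W} -> R, list_choice L r -> packing_on h L T (inside L r) qr.
  move=> r; case: (boolP (list_choice L r)) => r_choice; last by exists (fun=> 0).
  have [|qr qr_packing] := @packing_on_sub R _ _ h L T (inside L r); last by exists qr.
  apply: (T_packing _ (sub_colour_rel h (inside L r)) (sub_list L T (inside L r))) => [|u].
    by apply: (sub_cover HC) => w /andP[/exists_inP[u uT wu] _]; exists u.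
  rewrite card_sub_list (card_inside HC r_choice (valP u)) inE (valP u) /=.
  by case: has_out_nbr; rewrite ?subn0.
exact: (mixture_frac_packing e_sym HC one_out_nbr list_sizes P1_packing q_packing).
Qed.
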